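(* For $n\ge0$, $\left|\Pi_n\wr C_2(1^11^1,1^11^2)\right| = \left|\mathcal{S}_{n+1}(12\!-\!3,\,214\!-\!3)\right|$.
   Context: For $n\ge0$ let $[n]=\{1,\dots,n\}$. A $2$-colored set partition of $[n]$ is a set partition of $[n]$ together with an assignment of a color from $\{1,2\}$ to each element; $\Pi_n\wr C_2$ is the set of these (with $\Pi_0\wr C_2$ containing only the empty partition). $\Pi_n\wr C_2(1^11^1,1^11^2)$ is the set of those colored partitions in which no two elements of the same block have the same color, and there are no $i<j$ in the same block with $i$ colored $1$ and $j$ colored $2$. $\mathcal{S}_{m}(12\!-\!3,214\!-\!3)$ is the set of permutations $q=q_1\cdots q_m$ of $[m]$ that contain no indices $a<a+1<b$ with $q_a<q_{a+1}<q_b$ (an occurrence of $12\!-\!3$) and no indices $a<a+1<a+2<b$ with $q_{a+1}<q_a<q_b<q_{a+2}$ (an occurrence of $214\!-\!3$). *)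

From mathcomp Require Import all_boot all_order all_fingroup.
Set Implicit Arguments. Unset Strict Implicit. Unset Printing Implicit Defensive.

(* Elements of [n] = {1,..,n} are represented by 'I_n (i : 'I_n stands for
   i+1; the order is preserved).  Colors {1,2} are represented by 'I_2:
   value 0 = color 1, value 1 = color 2. *)

Definition colored_partition (n : nat)
    (Pc : {set {set 'I_n}} * {ffun 'I_n -> 'I_2}) : bool :=
  partition Pc.1 [set: 'I_n].

(* Avoidance of 1^1 1^1 (no two elements of a block with the same color)
   and of 1^1 1^2 (no i<j in a block with i colored 1 and j colored 2). *)
Definition avoids_11_12 (n : nat)
    (Pc : {set {set 'I_n}} * {ffun 'I_n -> 'I_2}) : bool :=
  [forall B in Pc.1, forall i in B, forall j in B,
     ((i != j) ==> (Pc.2 i != Pc.2 j)) &&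
     ~~ [&& (i < j)%N, val (Pc.2 i) == 0%N & val (Pc.2 j) == 1%N]].

Definition Pi_wr_C2_avoid (n : nat) :=
  [set Pc : {set {set 'I_n}} * {ffun 'I_n -> 'I_2}
     | colored_partition Pc && avoids_11_12 Pc].

(* Permutations q of [m], positions and values shifted by one. *)
Definition contains_12_3 (m : nat) (q : {perm 'I_m}) : bool :=
  [exists a : 'I_m, exists a1 : 'I_m, exists b : 'I_m,
     [&& val a1 == (val a).+1, (val a1 < val b)%N,
         (val (q a) < val (q a1))%N & (val (q a1) < val (q b))%N]].

Definition contains_214_3 (m : nat) (q : {perm 'I_m}) : bool :=
  [exists a : 'I_m, exists a1 : 'I_m, exists a2 : 'I_m, exists b : 'I_m,
     [&& val a1 == (val a).+1, val a2 == (val a).+2, (val a2 < val b)%N,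
         (val (q a1) < val (q a))%N, (val (q a) < val (q b))%N
       & (val (q b) < val (q a2))%N]].

Definition S_avoid_12_3_214_3 (m : nat) :=
  [set q : {perm 'I_m} | ~~ contains_12_3 q && ~~ contains_214_3 q].

From mathcomp Require Import all_boot all_order all_fingroup.
Set Implicit Arguments. Unset Strict Implicit. Unset Printing Implicit Defensive.

(* Both sides satisfy a(k+2) = 2 a(k+1) + k a(k), the recurrence of involutions with
   2-colored fixed points.
   In an avoiding colored partition every block has at most two elements, a pair {i < j} is
   forced to color i with 2 and j with 1, and singletons are colored freely; classifying by
   the block of a fixed element gives the recurrence.
   For permutations, work with sequences of distinct numbers and classify by the first entry
   x.  If at most one later entry exceeds x, then x lies in no occurrence of either pattern
   and can be dropped; this happens exactly for the two largest entries.  Otherwise the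
   sequence avoids both patterns iff its second entry is the maximum and the rest avoids
   them. *)

Definition starts_12_3 (x : nat) (w : seq nat) : bool :=
  if w is y :: w' then (x < y) && has (fun z => y < z) w' else false.

Definition starts_214_3 (x : nat) (w : seq nat) : bool :=
  if w is y :: z :: w' then (y < x) && has (fun v => x < v < z) w' else false.

Fixpoint has_12_3 (t : seq nat) : bool :=
  if t is x :: w then starts_12_3 x w || has_12_3 w else false.

Fixpoint has_214_3 (t : seq nat) : bool :=
  if t is x :: w then starts_214_3 x w || has_214_3 w else false.

Definition avoids (t : seq nat) : bool := ~~ has_12_3 t && ~~ has_214_3 t.

Lemma has_12_3P t :
  reflect (exists a b, [/\ a.+1 < b, b < size t,
                          nth 0 t a < nth 0 t a.+1 & nth 0 t a.+1 < nth 0 t b])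
          (has_12_3 t).
Proof.
apply: (equivP idP).
elim: t => [|x w IH] /=; first by split=> // -[a [b []]].
split.
  case/orP => [|/IH [a [b [? ? ? ?]]]]; last by exists a.+1, b.+1.
  case: w {IH} => [|y w] //= /andP[xy /hasP[z zw yz]].
  by exists 0, (index z w).+2; rewrite /= !ltnS index_mem nth_index.
case=> -[|a] [b [ab bt tab tbc]]; last first.
  by case: b ab bt tab tbc => [|b] // *; apply/orP; right; apply/IH; exists a, b.
case: w bt tab tbc {IH} => [|y w] //; case: b ab => [|[|b]] //= _ bw xy yz.
by apply/orP; left; rewrite xy; apply/hasP; exists (nth 0 w b); rewrite ?mem_nth.
Qed.

Lemma has_214_3P t :
  reflect (exists a b, [/\ a.+2 < b, b < size t, nth 0 t a.+1 < nth 0 t a,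
                          nth 0 t a < nth 0 t b & nth 0 t b < nth 0 t a.+2])
          (has_214_3 t).
Proof.
apply: (equivP idP).
elim: t => [|x w IH] /=; first by split=> // -[a [b []]].
split.
  case/orP => [|/IH [a [b [? ? ? ? ?]]]]; last by exists a.+1, b.+1.
  case: w {IH} => [|y [|z w]] //= /andP[yx /hasP[v vw /andP[xv vz]]].
  by exists 0, (index v w).+3; rewrite /= !ltnS index_mem nth_index.
case=> -[|a] [b [ab bt t1 t2 t3]]; last first.
  by case: b ab bt t1 t2 t3 => [|b] // *; apply/orP; right; apply/IH; exists a, b.
case: w bt t1 t2 t3 {IH} => [|y [|z w]] //; case: b ab => [|[|[|b]]] //= _ bw yx xv vz.
by apply/orP; left; rewrite yx; apply/hasP; exists (nth 0 w b); rewrite ?mem_nth ?xv.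
Qed.

Definition oneline m (q : {perm 'I_m}) : seq nat := [seq val (q i) | i <- enum 'I_m].

Lemma size_oneline m (q : {perm 'I_m}) : size (oneline q) = m.
Proof. by rewrite size_map size_enum_ord. Qed.

Lemma nth_oneline m (q : {perm 'I_m}) (i : 'I_m) : nth 0 (oneline q) i = val (q i).
Proof. by rewrite (nth_map i) ?size_enum_ord // nth_ord_enum. Qed.

Lemma contains_12_3E m (q : {perm 'I_m}) : contains_12_3 q = has_12_3 (oneline q).
Proof.
apply/existsP/has_12_3P => [[a /existsP[a1 /existsP[b]]] | [a [b []]]].
  by case/and4P => /eqP a1E *; exists a, b; rewrite size_oneline -a1E !nth_oneline.
rewrite size_oneline => ab bm qa qb.
have a1m := ltn_trans ab bm; have am := ltnW a1m.
exists (Ordinal am); apply/existsP; exists (Ordinal a1m); apply/existsP; exists (Ordinal bm).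
by rewrite -!(nth_oneline q) /= eqxx ab qa qb.
Qed.

Lemma contains_214_3E m (q : {perm 'I_m}) : contains_214_3 q = has_214_3 (oneline q).
Proof.
apply/existsP/has_214_3P => [[a /existsP[a1 /existsP[a2 /existsP[b]]]] | [a [b []]]].
  case/and3P => /eqP a1E /eqP a2E /and4P[*].
  by exists a, b; rewrite size_oneline -a2E -a1E !nth_oneline.
rewrite size_oneline => ab bm q1 q2 q3.
have a2m := ltn_trans ab bm; have a1m := ltnW a2m; have am := ltnW a1m.
exists (Ordinal am); apply/existsP; exists (Ordinal a1m); apply/existsP.
exists (Ordinal a2m); apply/existsP; exists (Ordinal bm).
by rewrite -!(nth_oneline q) /= !eqxx ab q1 q2 q3.
Qed.

Lemma oneline_inj m : injective (@oneline m).
Proof. by move=> q1 q2 eq_q; apply/permP => i; apply: val_inj; rewrite -!nth_oneline eq_q. Qed.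

Lemma oneline_iota m (q : {perm 'I_m}) : perm_eq (oneline q) (iota 0 m).
Proof.
rewrite /oneline -val_enum_ord (map_comp val q); apply: perm_map.
apply: uniq_perm; rewrite ?(map_inj_uniq (@perm_inj _ q)) ?enum_uniq //.
by move=> i; rewrite mem_enum; apply/mapP; exists (q^-1 i)%g; rewrite ?mem_enum ?permKV.
Qed.

Lemma oneline_onto m (t : seq nat) :
  perm_eq t (iota 0 m) -> exists q : {perm 'I_m}, oneline q = t.
Proof.
move=> perm_t.
have size_t : size t = m by rewrite (perm_size perm_t) size_iota.
have lt_nth i : i < m -> nth 0 t i < m.
  move=> im; have : nth 0 t i \in iota 0 m by rewrite -(perm_mem perm_t) mem_nth ?size_t.
  by rewrite mem_iota.
pose g (i : 'I_m) := Ordinal (lt_nth i (ltn_ord i)).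
have g_inj : injective g.
  move=> i j /(congr1 val) /eqP /=; rewrite nth_uniq ?size_t //.
    by move/eqP; apply: val_inj.
  by rewrite (perm_uniq perm_t) iota_uniq.
exists (perm g_inj).
rewrite /oneline -[RHS](mkseq_nth 0) size_t /mkseq -val_enum_ord -map_comp.
by apply: eq_map => i; rewrite /= permE.
Qed.

Lemma card_S_avoid m : #|S_avoid_12_3_214_3 m| = count avoids (permutations (iota 0 m)).
Proof.
rewrite -size_filter cardE -(size_map (@oneline m)); apply: perm_size.
apply: uniq_perm; rewrite ?filter_uniq ?permutations_uniq //.
  by rewrite (map_inj_uniq (@oneline_inj m)) enum_uniq.
move=> t; rewrite mem_filter mem_permutations; apply/mapP/andP => [[q]|[av perm_t]].
  rewrite mem_enum inE /avoids contains_12_3E contains_214_3E => av ->.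
  by rewrite av oneline_iota.
have [q qt] := oneline_onto perm_t; exists q; last by rewrite qt.
by rewrite mem_enum inE contains_12_3E contains_214_3E qt.
Qed.

Lemma avoids_cons x w :
  avoids (x :: w) = [&& ~~ starts_12_3 x w, ~~ starts_214_3 x w & avoids w].
Proof. by rewrite /avoids /= !negb_or andbACA -andbA. Qed.

Lemma avoids_cons_top x w :
  {in w &, forall y z, x < y -> x < z -> y = z} -> avoids (x :: w) = avoids w.
Proof.
move=> top; rewrite avoids_cons.
suff [-> ->] : starts_12_3 x w = false /\ starts_214_3 x w = false by [].
case: w top => [|y w] //= top; split.
  apply/negbTE/negP => /andP[xy /hasP[z zw yz]].
  have := top y z (mem_head _ _) (@mem_behead _ (y :: w) _ zw) xy (ltn_trans xy yz).
  by move=> eq_yz; rewrite eq_yz ltnn in yz.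
case: w top => [|z w] //= top.
apply/negbTE/negP => /andP[_ /hasP[v vw /andP[xv vz]]].
have := top v z; rewrite !inE vw eqxx !orbT => /(_ isT isT xv (ltn_trans xv vz)).
by move=> eq_vz; rewrite eq_vz ltnn in vz.
Qed.

(* If [h] is the first entry above [t] and [c] another one, then [z h c] is a 12-3 when
   [h < c]; when [c < h], either [y z h] is a 12-3 or [y z h] with [c] is a 214-3. *)
Lemma avoids_two_low t y z u : uniq [:: y, z & u] -> avoids [:: y, z & u] ->
  y <= t -> z <= t -> {in u &, forall a b, t < a -> t < b -> a = b}.
Proof.
elim: u y z => [//|h u IH] y z uniq_yzu av yt zt a b au bu ta tb.
have av_zhu : avoids [:: z, h & u] by move: av; rewrite avoids_cons => /and3P[].
have [ht|th] := leqP h t.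
  have ah : a != h by apply: contraTneq ta => ->; rewrite -leqNgt.
  have bh : b != h by apply: contraTneq tb => ->; rewrite -leqNgt.
  apply: (IH z h _ av_zhu zt ht) => //; first by case/andP: uniq_yzu.
    by move: au; rewrite inE (negbTE ah).
  by move: bu; rewrite inE (negbTE bh).
have [//|ab] := eqVneq a b; exfalso.
have [c cu /andP[tc ch]] : exists2 c, c \in u & (t < c) && (c != h).
  have [eq_ah|ah] := eqVneq a h.
    exists b; last by rewrite tb -eq_ah eq_sym.
    by move: bu; rewrite inE -eq_ah eq_sym (negbTE ab).
  by exists a; [move: au; rewrite inE (negbTE ah) | rewrite ta].
have [hc|ch'|eq_hc] := ltngtP h c; last by rewrite eq_hc eqxx in ch.
- move: av_zhu; rewrite avoids_cons /= => /andP[/negP[]].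
  by rewrite (leq_ltn_trans zt th); apply/hasP; exists c.
- move: av; rewrite avoids_cons /= => /and3P[no123 no214 _].
  have yz : y != z by case/andP: uniq_yzu; rewrite inE negb_or => /andP[].
  have [lt_yz|lt_zy|eq_yz] := ltngtP y z; last by rewrite eq_yz eqxx in yz.
    by move/negP: no123; apply; rewrite lt_yz /= (leq_ltn_trans zt th).
  move/negP: no214; apply; rewrite lt_zy /=; apply/hasP; exists c => //.
  by rewrite ch' (leq_ltn_trans yt tc).
Qed.

Lemma starts_12_3_max x w : {in w, forall z, z <= x} -> ~~ starts_12_3 x w.
Proof. by case: w => [|y w] //= maxx; rewrite negb_and -leqNgt maxx ?mem_head. Qed.

Lemma starts_214_3_max x w : {in w, forall z, z <= x} -> ~~ starts_214_3 x w.
Proof.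
case: w => [|y [|z w]] //= maxx; rewrite negb_and; apply/orP; right.
by apply/hasPn => v vw; rewrite negb_and -leqNgt maxx // !inE vw !orbT.
Qed.

Lemma avoids_cons_low x y t M M2 : uniq [:: x, y & t] ->
  M \in y :: t -> M2 \in y :: t -> x < M2 < M -> {in y :: t, forall z, z <= M} ->
  avoids [:: x, y & t] = (y == M) && avoids t.
Proof.
move=> uniq_xyt Myt M2yt /andP[xM2 M2M] maxM.
have xM := ltn_trans xM2 M2M.
have maxMt : {in t, forall z, z <= M} by move=> z zt; rewrite maxM // inE zt orbT.
have [->|yM] := eqVneq y M.
  have no123_x : ~~ starts_12_3 x (M :: t).
    by rewrite /= negb_and; apply/orP; right; apply/hasPn => z /maxMt; rewrite -leqNgt.
  have no214_x : ~~ starts_214_3 x (M :: t).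
    by case: (t) => [|z t'] //=; rewrite negb_and -leqNgt ltnW.
  by rewrite avoids_cons (avoids_cons M t) no123_x no214_x starts_12_3_max ?starts_214_3_max.
apply/negbTE/negP => av.
have Mt : M \in t by move: Myt; rewrite inE eq_sym (negbTE yM).
have xy : x != y by case/andP: uniq_xyt; rewrite inE negb_or => /andP[].
have [lt_xy|lt_yx|eq_xy] := ltngtP x y; last by rewrite eq_xy eqxx in xy.
  move: av; rewrite avoids_cons => /andP[/negP[]] /=.
  by rewrite lt_xy /=; apply/hasP; exists M; rewrite // ltn_neqAle yM maxM ?mem_head.
have M2y : M2 != y by apply: contraTneq xM2 => ->; rewrite -leqNgt ltnW.
have M2t : M2 \in t by move: M2yt; rewrite inE (negbTE M2y).
have := avoids_two_low uniq_xyt av (leqnn x) (ltnW lt_yx) Mt M2t xM xM2.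
by move=> eq_MM2; rewrite eq_MM2 ltnn in M2M.
Qed.

Lemma count_permutations_cons (T : eqType) (P : pred (seq T)) (s : seq T) :
  uniq s -> 0 < size s ->
  count P (permutations s) =
    \sum_(x <- s) count (fun t => P (x :: t)) (permutations (rem x s)).
Proof.
move=> uniq_s s_gt0; rewrite (seq.permP (permutationsE s_gt0)) (undup_id uniq_s).
elim: {2 3}s => [|x r IH]; first by rewrite big_nil.
by rewrite big_cons -IH /= count_cat count_map.
Qed.

Lemma perm_cons_rem (T : eqType) (s t : seq T) x :
  x \in s -> t \in permutations (rem x s) -> perm_eq (x :: t) s.
Proof.
move=> xs; rewrite mem_permutations => perm_t.
by rewrite perm_sym (permPl (perm_to_rem xs)) perm_cons perm_sym.
Qed.

Lemma exists_max (s : seq nat) :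
  s != [::] -> exists2 M, M \in s & {in s, forall z, z <= M}.
Proof.
case: s => [//|x s] _; elim: s x => [|y s IH] x.
  by exists x => [|z]; rewrite ?mem_head // inE => /eqP->.
have [M Ms maxM] := IH (maxn x y); exists M.
  move: Ms; rewrite !inE => /orP[/eqP->|->]; last by rewrite !orbT.
  by rewrite /maxn; case: ltnP; rewrite eqxx ?orbT.
move=> z; rewrite !inE => /or3P[/eqP->|/eqP->|zs]; last by rewrite maxM // inE zs orbT.
  by apply: leq_trans (maxM _ (mem_head _ _)); rewrite leq_maxl.
by apply: leq_trans (maxM _ (mem_head _ _)); rewrite leq_maxr.
Qed.

(* [avoid_count k.+1] is the number of involutions of [k] with 2-colored fixed points
   (OEIS A005425); the shift matches the length of the avoiding permutations. *)
Fixpoint avoid_count (k : nat) : nat :=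
  match k with
  | (k2.+1 as k1).+1 => 2 * avoid_count k1 + k2 * avoid_count k2
  | _ => 1
  end.

Lemma avoid_countSS k : avoid_count k.+2 = 2 * avoid_count k.+1 + k * avoid_count k.
Proof. by []. Qed.

Lemma count_avoids_cons_top s x : x \in s ->
  {in s &, forall y z, x < y -> x < z -> y = z} ->
  count (fun t => avoids (x :: t)) (permutations (rem x s)) =
    count avoids (permutations (rem x s)).
Proof.
move=> xs top; apply: eq_in_count => t perm_t; apply: avoids_cons_top => y z yt zt.
have /perm_mem mem_t := perm_cons_rem xs perm_t.
by apply: top; rewrite -mem_t inE ?yt ?zt orbT.
Qed.

Lemma count_avoids_cons_low s x M M2 : uniq s -> x \in s -> M \in s -> M2 \in s ->
  x < M2 < M -> {in s, forall z, z <= M} ->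
  count (fun t => avoids (x :: t)) (permutations (rem x s)) =
    count avoids (permutations (rem M (rem x s))).
Proof.
move=> uniq_s xs Ms M2s /andP[xM2 M2M] maxM.
have mem_rem_x z : (z \in rem x s) = (z != x) && (z \in s) by rewrite mem_rem_uniq // inE.
have Mx : M != x by rewrite gtn_eqF // (ltn_trans xM2 M2M).
have M2x : M2 != x by rewrite gtn_eqF.
have uniq_r := rem_uniq x uniq_s.
have Mr : M \in rem x s by rewrite mem_rem_x Mx.
have avoids_xy y t : y \in rem x s -> t \in permutations (rem y (rem x s)) ->
    avoids [:: x, y & t] = (y == M) && avoids t.
  move=> yr perm_t; have perm_yt := perm_cons_rem yr perm_t.
  have perm_xyt : perm_eq [:: x, y & t] s.
    by apply: perm_cons_rem xs _; rewrite mem_permutations.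
  have /perm_mem mem_yt := perm_yt.
  have uniq_xyt : uniq [:: x, y & t] by rewrite (perm_uniq perm_xyt).
  apply: (avoids_cons_low (M2 := M2) uniq_xyt); rewrite ?mem_yt ?mem_rem_x ?Mx ?M2x ?xM2 //.
  by move=> z; rewrite mem_yt => /mem_rem /maxM.
rewrite count_permutations_cons //; last by case: (rem x s) Mr.
rewrite (big_rem M Mr) big1_seq /= ?addn0 => [|y yrM].
  by apply: eq_in_count => t perm_t; rewrite avoids_xy // eqxx.
have yM : y != M by move: yrM; rewrite mem_rem_uniq // inE => /andP[].
apply/eqP; rewrite -leqn0 leqNgt -has_count; apply/hasPn => t perm_t.
by rewrite avoids_xy ?(negbTE yM) // (mem_rem yrM).
Qed.

Lemma count_avoids_permutations s :
  uniq s -> count avoids (permutations s) = avoid_count (size s).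
Proof.
have [k] := ubnP (size s); elim: k s => // k IH s size_s_lt uniq_s.
have IHr r : uniq r -> size r < size s ->
    count avoids (permutations r) = avoid_count (size r).
  by move=> uniq_r lt_rs; apply: IH (leq_trans lt_rs size_s_lt) uniq_r.
have [|size_s_ge2] := ltnP (size s) 2.
  by case: s {IH IHr size_s_lt uniq_s} => [|a [|b s]].
have [n size_s] : {n | size s = n.+2}.
  by exists (size s).-2; case: (size s) size_s_ge2 => [|[|m]].
have [M Ms maxM] : exists2 M, M \in s & {in s, forall z, z <= M}.
  by apply: exists_max; rewrite -size_eq0 size_s.
have mem_rem_M z : (z \in rem M s) = (z != M) && (z \in s) by rewrite mem_rem_uniq // inE.
have [M2 M2r maxM2] : exists2 M2, M2 \in rem M s & {in rem M s, forall z, z <= M2}.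
  by apply: exists_max; rewrite -size_eq0 size_rem // size_s.
have /andP[M2M M2s] : (M2 != M) && (M2 \in s) by rewrite -mem_rem_M.
have lt_M2M : M2 < M by rewrite ltn_neqAle M2M maxM.
have top_M2 : {in s, forall z, M2 < z -> z = M}.
  by move=> z zs; apply: contraTeq => zM; rewrite -leqNgt maxM2 // mem_rem_M zM.
rewrite count_permutations_cons ?size_s // (big_rem M Ms) (big_rem M2 M2r) /=.
rewrite count_avoids_cons_top // => [|y z ys _]; last by rewrite ltnNge maxM.
rewrite count_avoids_cons_top // => [|y z ys zs /(top_M2 _ ys)-> /(top_M2 _ zs)->] //.
rewrite (eq_big_seq (fun=> avoid_count n)) => [|x].
  rewrite big_const_seq count_predT iter_addn_0 !IHr ?rem_uniq ?size_rem ?size_s //.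
  by rewrite !succnK addnA addnn -mul2n (mulnC n).
rewrite mem_rem_uniq ?rem_uniq // inE mem_rem_M => /and3P[xM2 xM xs].
have lt_xM2 : x < M2 by rewrite ltn_neqAle xM2 maxM2 // mem_rem_M xM.
have Mr : M \in rem x s by rewrite mem_rem_uniq // inE Ms gtn_eqF // (ltn_trans lt_xM2).
rewrite (count_avoids_cons_low (M := M) (M2 := M2)) ?lt_xM2 //.
by rewrite IHr ?rem_uniq // !size_rem // size_s.
Qed.

Definition col (b : bool) : 'I_2 := if b then @Ordinal 2 1 isT else @Ordinal 2 0 isT.

Lemma I2_col (a : 'I_2) : a = col false \/ a = col true.
Proof. by case: a => [[|[|?]] //] ?; [left|right]; apply: val_inj. Qed.

Lemma card_bij_in (T U : finType) (A : {set T}) (B : {set U}) (f : T -> U) (g : U -> T) :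
  {in A, forall a, f a \in B} -> {in B, forall b, g b \in A} ->
  {in A, cancel f g} -> {in B, cancel g f} -> #|A| = #|B|.
Proof.
move=> fAB gBA fK gK.
have -> : B = f @: A.
  apply/setP => b; apply/idP/imsetP => [Bb|[a Aa ->]]; last exact: fAB.
  by exists (g b); [apply: gBA | rewrite gK].
by rewrite card_in_imset // => a1 a2 a1A a2A eq_f; rewrite -(fK a1 a1A) eq_f fK.
Qed.

Section ColoredPartitions.

Variable n : nat.
Implicit Types (D B : {set 'I_n}) (P : {set {set 'I_n}}) (c : {ffun 'I_n -> 'I_2}).

Definition good_block c B : bool :=
  [forall i in B, forall j in B,
     ((i != j) ==> (c i != c j)) &&
     ~~ [&& (i < j)%N, val (c i) == 0%N & val (c j) == 1%N]].

Lemma good_blockP c B :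
  reflect {in B &, forall i j, ((i != j) ==> (c i != c j)) &&
                               ~~ [&& (i < j)%N, val (c i) == 0%N & val (c j) == 1%N]}
          (good_block c B).
Proof.
apply: (iffP forallP) => [good i j iB jB | good i].
  by move: (good i); rewrite iB => /forallP/(_ j); rewrite jB.
by apply/implyP => iB; apply/forallP => j; apply/implyP; apply: good.
Qed.

(* With only two colors, two elements distinct from [x] cannot both differ in color from
   [x] and from each other. *)
Lemma good_block_small c B x y z : good_block c B ->
  x \in B -> y \in B -> z \in B -> x != y -> x != z -> y = z.
Proof.
move/good_blockP => good xB yB zB xy xz; apply/eqP; apply: contraT => yz.
have /andP[cxy _] := good x y xB yB; have /andP[cxz _] := good x z xB zB.
have /andP[cyz _] := good y z yB zB; rewrite xy xz yz /= in cxy cxz cyz.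
by move: cxy cxz cyz; case: (I2_col (c x)) => ->; case: (I2_col (c y)) => ->;
  case: (I2_col (c z)) => ->.
Qed.

Lemma good_block_col c B x y : good_block c B ->
  x \in B -> y \in B -> x != y -> c x = col (x < y)%N.
Proof.
move/good_blockP => good xB yB xy.
have /andP[cxy nxy] := good x y xB yB; have /andP[_ nyx] := good y x yB xB.
rewrite xy /= in cxy; move: cxy nxy nyx.
have [lt|lt|eq] := ltngtP x y; last by rewrite (ord_inj eq) eqxx in xy.
  by case: (I2_col (c x)) => ->; case: (I2_col (c y)) => ->.
by case: (I2_col (c x)) => ->; case: (I2_col (c y)) => ->.
Qed.

Lemma good_block1 c x : good_block c [set x].
Proof. by apply/good_blockP => i j; rewrite !inE => /eqP-> /eqP->; rewrite eqxx ltnn. Qed.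

Lemma good_block2 c x y : x != y ->
  c x = col (x < y)%N -> c y = col (y < x)%N -> good_block c [set x; y].
Proof.
move=> xy cx cy; apply/good_blockP => i j; rewrite !inE.
have [lt|lt|eq] := ltngtP x y; last by rewrite (ord_inj eq) eqxx in xy.
  by case/orP=> /eqP-> /orP[]/eqP->;
    rewrite ?eqxx ?cx ?cy ?lt ?(ltnNge y x) ?(ltnW lt) ?ltnn //= ?(eq_sym y) ?xy.
by case/orP=> /eqP-> /orP[]/eqP->;
  rewrite ?eqxx ?cx ?cy ?lt ?(ltnNge x y) ?(ltnW lt) ?ltnn //= ?(eq_sym y) ?xy.
Qed.

(* The coloring is normalised to color 1 off [D], so that an element of [avoiding_on D]
   is determined by its restriction to [D]. *)
Definition avoiding_on D :=
  [set Pc : {set {set 'I_n}} * {ffun 'I_n -> 'I_2} |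
     [&& partition Pc.1 D, avoids_11_12 Pc
       & [forall i, (i \notin D) ==> (Pc.2 i == col false)]]].

Lemma Pi_wr_C2_avoidE : Pi_wr_C2_avoid n = avoiding_on [set: 'I_n].
Proof.
apply/setP => Pc; rewrite !inE /colored_partition.
case: (partition _ _) (avoids_11_12 _) => [] [] //=.
by apply/esym/forallP => i; rewrite inE.
Qed.

Lemma avoiding_onP D P c :
  reflect [/\ partition P D, {in P, forall B, good_block c B}
            & {in ~: D, forall i, c i = col false}]
          ((P, c) \in avoiding_on D).
Proof.
rewrite inE; apply: (iffP and3P) => [[partP /forallP good /forallP out]|[partP good out]].
  split=> // [B BP|i iD]; first by move: (good B); rewrite BP.
  by apply/eqP; move: (out i); rewrite -in_setC iD.
split=> //; first by apply/forallP => B; apply/implyP => /good.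
by apply/forallP => i; apply/implyP; rewrite -in_setC => /out ->.
Qed.

Definition reset_colors c B : {ffun 'I_n -> 'I_2} :=
  [ffun i => if i \in B then col false else c i].

Definition set_color c x v : {ffun 'I_n -> 'I_2} := [ffun i => if i == x then v else c i].

Lemma avoiding_on_remove D P c B : (P, c) \in avoiding_on D -> B \in P ->
  (P :\ B, reset_colors c B) \in avoiding_on (D :\: B).
Proof.
move=> /avoiding_onP [partP good out] BP.
have BD := partitionS partP BP.
apply/avoiding_onP; split; first exact: partitionD1.
  move=> B'; rewrite !inE => /andP[B'B B'P].
  have /disjointFr notB : [disjoint B' & B].
    by move/trivIsetP: (partition_trivIset partP); apply.
  have /good_blockP goodB' := good B' B'P; apply/good_blockP => i j iB' jB'.
  by rewrite !ffunE notB ?notB //; apply: goodB'.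
move=> i; rewrite ffunE !inE negb_and negbK; case: ifP => // iB /= iD.
by rewrite out // inE.
Qed.

Lemma avoiding_on_insert D P c B c' : (P, c) \in avoiding_on (D :\: B) ->
  B \subset D -> B != set0 -> {in ~: B, c' =1 c} -> good_block c' B ->
  (B |: P, c') \in avoiding_on D.
Proof.
move=> /avoiding_onP [partP good out] BD B0 c'E goodB.
have notB B' i : B' \in P -> i \in B' -> i \in ~: B.
  by move=> B'P /(subsetP (partitionS partP B'P)); rewrite !inE => /andP[].
apply/avoiding_onP; split.
- rewrite -(setID D B) (setIidPr BD); apply: partitionU1 => //.
  by rewrite disjoints_subset setDE setCI setCK subsetUr.
- move=> B'; rewrite !inE => /orP[/eqP-> //|B'P].
  have /good_blockP goodB' := good B' B'P; apply/good_blockP => i j iB' jB'.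
  by rewrite !c'E ?(notB B') //; apply: goodB'.
- move=> i; rewrite inE => iD.
  have iB : i \in ~: B by rewrite inE; apply: contra iD; apply: subsetP.
  by rewrite c'E // out // !inE negb_and iD orbT.
Qed.

Definition partner x (Pc : {set {set 'I_n}} * {ffun 'I_n -> 'I_2}) : 'I_n :=
  odflt x [pick y in pblock Pc.1 x | y != x].

Lemma partner_block D P c x : (P, c) \in avoiding_on D -> x \in D ->
  [/\ pblock P x \in P,
      partner x (P, c) = x -> pblock P x = [set x] &
      partner x (P, c) != x -> pblock P x = [set x; partner x (P, c)]].
Proof.
move=> /avoiding_onP [partP good _] xD.
have BP : pblock P x \in P by rewrite pblock_mem // (cover_partition partP).
have xB : x \in pblock P x by rewrite mem_pblock (cover_partition partP).
split => //; rewrite /partner /=; case: pickP => [y /andP[yB yx] | none] /=.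
- by move=> eq_yx; rewrite eq_yx eqxx in yx.
- move=> _; apply/setP => z; rewrite !inE; apply/idP/eqP => [zB|-> //].
  by apply/eqP; apply: contraFT (none z) => zx; rewrite zB.
- move=> _; apply/setP => z; rewrite !inE; apply/idP/idP => [zB|/orP[]/eqP-> //].
  have [//|zx] := eqVneq z x.
  by rewrite (good_block_small (good _ BP) xB yB zB) ?eqxx ?orbT // eq_sym.
- by rewrite eqxx.
Qed.

Lemma partner_single P c x : trivIset P -> [set x] \in P -> partner x (P, c) = x.
Proof.
move=> triP BP; rewrite /partner /= (def_pblock triP BP (set11 x)).
by case: pickP => [y /andP[]|] //=; rewrite inE => /eqP->; rewrite eqxx.
Qed.

Lemma partner_pair P c x y : trivIset P -> [set x; y] \in P -> y != x ->
  partner x (P, c) = y.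
Proof.
move=> triP BP yx; rewrite /partner /= (def_pblock triP BP (set21 x y)).
case: pickP => [z /andP[]|none] /=; first by rewrite !inE => /orP[]/eqP-> //; rewrite eqxx.
by move: (none y); rewrite !inE eqxx orbT yx.
Qed.

Lemma avoiding_on_notin D P c B : (P, c) \in avoiding_on (D :\: B) -> B != set0 -> B \notin P.
Proof.
move=> /avoiding_onP [partP _ _] /set0Pn[x xB]; apply/negP => BP.
by have /subsetP/(_ x xB) := partitionS partP BP; rewrite inE xB.
Qed.

Lemma card_partner_self D x : x \in D ->
  #|[set Pc in avoiding_on D | partner x Pc == x]| = 2 * #|avoiding_on (D :\ x)|.
Proof.
move=> xD; rewrite mulnC.
transitivity (#|avoiding_on (D :\ x)| * #|[set: 'I_2]|); last by rewrite cardsT card_ord.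
rewrite -cardsX.
apply: (@card_bij_in _ _ _ _
   (fun Pc => ((Pc.1 :\ [set x], reset_colors Pc.2 [set x]), Pc.2 x))
   (fun Qv => ([set x] |: Qv.1.1, set_color Qv.1.2 x Qv.2))).
- move=> [P c] /setIdP[PcD /eqP px]; have [BP single _] := partner_block PcD xD.
  by rewrite in_setX in_setT andbT avoiding_on_remove // -single.
- move=> [[P c] v]; rewrite in_setX in_setT andbT /= => PcDx.
  have x0 : [set x] != set0 by apply/set0Pn; exists x; rewrite inE.
  have PcD : ([set x] |: P, set_color c x v) \in avoiding_on D.
    apply: (avoiding_on_insert PcDx); rewrite ?sub1set ?good_block1 //.
    by move=> i; rewrite !inE ffunE => /negbTE->.
  have [/partition_trivIset triP _ _] := avoiding_onP _ _ _ PcD.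
  by rewrite inE PcD partner_single ?setU11 ?eqxx.
- move=> [P c] /setIdP[PcD /eqP px]; have [BP single _] := partner_block PcD xD.
  have Bx : [set x] \in P by rewrite -single.
  rewrite /= setD1K //; congr (_, _); apply/ffunP => i; rewrite !ffunE inE.
  by case: eqP => [->|].
- move=> [[P c] v]; rewrite in_setX in_setT andbT /= => PcDx.
  have [_ _ out] := avoiding_onP _ _ _ PcDx.
  rewrite setU1K ?(avoiding_on_notin PcDx) ?ffunE ?eqxx //; last first.
    by apply/set0Pn; exists x; rewrite inE.
  congr (_, _, _); apply/ffunP => i; rewrite !ffunE inE.
  by case: eqP => // ->; rewrite out // !inE eqxx.
Qed.

Lemma card_partner D x y : x \in D -> y \in D -> y != x ->
  #|[set Pc in avoiding_on D | partner x Pc == y]| = #|avoiding_on (D :\: [set x; y])|.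
Proof.
move=> xD yD yx; have xy : x != y by rewrite eq_sym.
have xy0 : [set x; y] != set0 by apply/set0Pn; exists x; rewrite !inE eqxx.
apply: (@card_bij_in _ _ _ _
   (fun Pc => (Pc.1 :\ [set x; y], reset_colors Pc.2 [set x; y]))
   (fun Q => ([set x; y] |: Q.1,
              set_color (set_color Q.2 x (col (x < y)%N)) y (col (y < x)%N)))).
- move=> [P c] /setIdP[PcD /eqP px]; have [BP _ pair] := partner_block PcD xD.
  by rewrite avoiding_on_remove // -px -pair // px.
- move=> [P c] /= PcDxy.
  have PcD : ([set x; y] |: P, set_color (set_color c x (col (x < y)%N)) y (col (y < x)%N))
               \in avoiding_on D.
    apply: (avoiding_on_insert PcDxy) => //.
    - by apply/subsetP => i; rewrite !inE => /orP[]/eqP->.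
    - by move=> i; rewrite !inE !ffunE negb_or => /andP[/negbTE-> /negbTE->].
    - by apply: good_block2; rewrite // !ffunE ?eqxx // (negbTE xy).
  have [/partition_trivIset triP _ _] := avoiding_onP _ _ _ PcD.
  by rewrite inE PcD (@partner_pair _ _ x y triP) ?setU11 ?eqxx.
- move=> [P c] /setIdP[PcD /eqP px]; have [BP _ pair] := partner_block PcD xD.
  have Bxy : [set x; y] \in P by rewrite -px -pair // px.
  have [_ good _] := avoiding_onP _ _ _ PcD.
  have xB : x \in [set x; y] by rewrite !inE eqxx.
  have yB : y \in [set x; y] by rewrite !inE eqxx orbT.
  have cx := good_block_col (good _ Bxy) xB yB xy.
  have cy := good_block_col (good _ Bxy) yB xB yx.
  rewrite /= setD1K //; congr (_, _); apply/ffunP => i; rewrite !ffunE !inE.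
  by case: eqP => [->|_]; [|case: eqP => [->|]]; rewrite ?eqxx ?orbT.
- move=> [P c] /= PcDxy; have [_ _ out] := avoiding_onP _ _ _ PcDxy.
  rewrite setU1K ?(avoiding_on_notin PcDxy) //; congr (_, _).
  apply/ffunP => i; rewrite !ffunE !inE.
  by case: eqP => [->|_]; [|case: eqP => [->|]] => //=; rewrite out // !inE eqxx ?orbT.
Qed.

Lemma card_avoiding_on_rec D x : x \in D ->
  #|avoiding_on D| =
    2 * #|avoiding_on (D :\ x)| + \sum_(y in D :\ x) #|avoiding_on (D :\: [set x; y])|.
Proof.
move=> xD.
have -> : #|avoiding_on D| = \sum_y #|[set Pc in avoiding_on D | partner x Pc == y]|.
  rewrite -sum1_card (partition_big (partner x) xpredT) //=.
  by apply: eq_bigr => y _; rewrite -sum1_card; apply: eq_bigl => Pc; rewrite inE.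
rewrite (bigD1 x) //= card_partner_self //; congr (_ + _).
rewrite [RHS]big_mkcond [LHS]big_mkcond /=; apply: eq_bigr => y _.
rewrite !inE; have [//|yx /=] := eqVneq y x.
have [yD|yD] := boolP (y \in D); first exact: card_partner.
apply/eqP; rewrite cards_eq0; apply/eqP/setP => -[P c]; rewrite in_set0.
apply/negbTE/negP => /setIdP[PcD /eqP px].
have [BP _ pair] := partner_block PcD xD; rewrite px in pair.
have [partP _ _] := avoiding_onP _ _ _ PcD.
have /subsetP/(_ y) := partitionS partP BP.
by rewrite pair // !inE eqxx orbT (negbTE yD) => /(_ isT).
Qed.

Lemma card_avoiding_on0 : #|avoiding_on set0| = 1.
Proof.
pose Pc0 : {set {set 'I_n}} * {ffun 'I_n -> 'I_2} := (set0, [ffun=> col false]).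
transitivity #|[set Pc0]|; last exact: cards1.
apply: eq_card => -[P c]; rewrite in_set1 xpair_eqE; apply/idP/andP => [|[/eqP-> /eqP->]].
  case/avoiding_onP; rewrite partition_set0 => /eqP-> _ out; split=> //.
  by apply/eqP/ffunP => i; rewrite ffunE out ?inE.
apply/avoiding_onP; split=> [|B|i _]; by rewrite ?partition_set0 ?inE ?ffunE.
Qed.

Lemma card_avoiding_on D : #|avoiding_on D| = avoid_count #|D|.+1.
Proof.
have [k] := ubnP #|D|; elim: k D => // k IH D lt_Dk.
have [->|[x xD]] := set_0Vmem D; first by rewrite cards0 card_avoiding_on0.
have card_D : #|D| = #|D :\ x|.+1 by rewrite (cardsD1 x D) xD.
rewrite (card_avoiding_on_rec xD) IH; last by rewrite -ltnS -card_D.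
rewrite (eq_bigr (fun=> avoid_count #|D :\ x|)) => [|y yDx]; last first.
  have card_Dx : #|D :\ x| = #|D :\: [set x; y]|.+1.
    by rewrite (cardsD1 y (D :\ x)) yDx setDDl.
  by rewrite IH -card_Dx // -ltnS (leq_trans _ lt_Dk) // card_D card_Dx leqnSn.
by rewrite sum_nat_const card_D avoid_countSS.
Qed.

End ColoredPartitions.

Theorem mainTheorem5 (n : nat) :
  #|Pi_wr_C2_avoid n| = #|S_avoid_12_3_214_3 n.+1|.
Proof.
rewrite Pi_wr_C2_avoidE card_avoiding_on cardsT card_ord card_S_avoid.
by rewrite count_avoids_permutations ?iota_uniq // size_iota.
Qed.
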